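(* Let $G=(V,E)$ have $|V|=2$, let $N>3$, $\varepsilon=0$ and $s_0\in S_{nc}$. Then: (1) for every $\gamma\in(0,1)$, $\Gamma_N(G|s_0,\gamma,0)$ has at least one nonpositional trigger strategies profile; (2) $\Gamma_N(G|s_0,\gamma,0)$ has at least one positional trigger strategies profile if and only if $\gamma\in\left(0,\frac1{N-1}\right]$.
   Context: Setting. $G=(V,E)$ is a finite, simple, connected, undirected graph; $N\ge 3$ is an integer; $\gamma\in(0,1)$ and $\varepsilon\in[0,\frac1{N-1}]$ are parameters. There are $N$ tokens: cops $C_1,\dots,C_{N-1}$ (tokens $1,\dots,N-1$) and the robber $R$ (token $N$). A state is $s=(x^1,\dots,x^N,n)$ where $x^i\in V$ is the position of token $i$ and $n\in\{1,\dots,N\}$ is the token that moves next; $S^n$ denotes the set of states with token $n$ to move. A state is a capture state if $x^i=x^N$ for some $i\le N-1$; $S_{nc}$ is the set of noncapture states. In each turn exactly one token, the one to move, moves to a vertex of its closed neighbourhood (it may stay put); the order of moves is $C_1,C_2,\dots,C_{N-1},R,C_1,\dots$. Starting from an initial state $s_0\in S_{nc}$ at time $0$, the capture time is the first time $t$ at which a capture state occurs (infinite if never); after capture the game is over. Auxiliary games. For $m\in\{1,\dots,N\}$, $\Gamma_N^m(G|s_0,\gamma,\varepsilon)$ is the two-player zero-sum game in which player $P_m$ controls token $m$ and player $P_{-m}$ controls all other tokens, with the following payoff to $P_m$ ($P_{-m}$ receives its negative): $0$ if no capture ever occurs; if capture occurs at time $t$: for $m=N$, $-\gamma^t$; for $m\le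 N-1$, $\frac{1-\varepsilon}{K}\gamma^t$ if exactly $K\in\{1,\dots,N-2\}$ cops, including $C_m$, are on the robber's vertex, $\frac{\varepsilon}{N-K-1}\gamma^t$ if exactly $K\in\{1,\dots,N-2\}$ cops, not including $C_m$, are on the robber's vertex, and $\frac{\gamma^t}{N-1}$ if all $N-1$ cops are on the robber's vertex. $\Gamma^N_N$ is the modified cops-and-robber (CR) game. A pure positional strategy for token $n$ maps each state in $S^n\cap S_{nc}$ to an allowed next vertex. Each $\Gamma^m_N$ has optimal pure positional strategies (optimal from every initial state). For $m,n\in\{1,\dots,N\}$, $\phi^n_m$ denotes the strategy of token $n$ in a chosen pair of optimal pure positional strategies of $\Gamma^m_N$ (so $\phi^m_m$ is $P_m$'s optimal strategy and $(\phi^n_m)_{n\ne m}$ is $P_{-m}$'s). $\widehat\Sigma^n$ is the set of pure positional strategies of token $n$ that are components of optimal strategy pairs of $\Gamma^N_N$ (CR-optimal strategies). Trigger strategies. Given a choice of $(\phi^n_m)_{n,m}$, the trigger strategies profile $\bar\sigma=(\bar\sigma^1,\dots,\bar\sigma^N)$ of the $N$-player SCAR game $\Gamma_N(G|s_0,\gamma,\varepsilon)$ (same board and moves; player $n$ controls token $n$) is: token $n$, at current state $s$, plays $\phi^n_n(s)$ as long as every other player $m$ has followed $\phi^m_m$, and plays $\phi^n_m(s)$ from the moment a player $m\neq n$ deviates from $\phi^m_m$. Different choices of the optimal strategies give different trigger strategies profiles. $\bar\sigma$ is called positional if for all $n,m\in\{1,\dots,N\}$ there is $\widehat\sigma^n\in\widehat\Sigma^n$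 with $\phi^n_m(s)=\widehat\sigma^n(s)$ for every state $s\in S^n\cap S_{nc}$ reachable from $s_0$ by a finite sequence of legal moves passing only through noncapture states; otherwise $\bar\sigma$ is nonpositional. *)

From HB Require Import structures.
From mathcomp Require Import all_boot.
From Stdlib Require Import Reals ClassicalEpsilon.

Set Implicit Arguments.
Unset Strict Implicit.
Unset Printing Implicit Defensive.

Section SCAR.

Variables (V : finType) (e : rel V) (N : nat).

(* Tokens are 'I_N, 0-indexed: cops are 0..N-2 (C_1..C_{N-1}), robber is N-1. *)
Definition is_cop (i : 'I_N) : bool := (val i < N.-1)%N.
Definition is_robber (i : 'I_N) : bool := (val i == N.-1).

(* A state: positions of the N tokens and the token to move next. *)
Definition state : Type := ({ffun 'I_N -> V} * 'I_N)%type.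

Definition adjv (x y : V) : bool := (x == y) || e x y.

Definition cops_at (s : state) : {set 'I_N} :=
  [set i | is_cop i && [exists j, is_robber j && (s.1 i == s.1 j)]].

Definition capture (s : state) : bool := (0 < #|cops_at s|)%N.

(* next token in the cyclic order C_1, ..., C_{N-1}, R, C_1, ... *)
Definition next_tok (i : 'I_N) : 'I_N :=
  match insub (val i).+1 with
  | Some j => j
  | None => odflt i (insub 0%N)
  end.

Definition step (s : state) (v : V) : state :=
  ([ffun i => if i == s.2 then v else s.1 i], next_tok s.2).

(* General (history-dependent) pure strategy: past history, current state -> vertex. *)
Definition strategy : Type := seq state -> state -> V.

Definition legal_strat (n : 'I_N) (sg : strategy) : Prop :=
  forall p s, s.2 = n -> ~~ capture s -> adjv (s.1 n) (sg p s).

(* Pure positional strategy: current state -> vertex (only its values on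
   S^n \cap S_nc matter). *)
Definition legal_pos (n : 'I_N) (f : state -> V) : Prop :=
  forall s, s.2 = n -> ~~ capture s -> adjv (s.1 n) (f s).

Definition lift (f : state -> V) : strategy := fun _ s => f s.

(* The play generated by a strategy profile from s0: (past history, state at time t). *)
Fixpoint run (sg : 'I_N -> strategy) (s0 : state) (t : nat) : seq state * state :=
  match t with
  | 0 => ([::], s0)
  | t'.+1 => let ps := run sg s0 t' in
             (rcons ps.1 ps.2, step ps.2 (sg ps.2.2 ps.1 ps.2))
  end.

Variables (gamma eps : R).

(* payoff coefficient to P_m at a capture state (multiplied by gamma^t) *)
Definition coef (m : 'I_N) (s : state) : R :=
  let K := #|cops_at s| in
  if is_robber m then (-1)%R
  else if K == N.-1 then (/ INR (N - 1))%R
  else if m \in cops_at s then ((1 - eps) / INR K)%R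
  else (eps / INR (N - K - 1))%R.

Definition payoff (m : 'I_N) (sg : 'I_N -> strategy) (s0 : state) : R :=
  match excluded_middle_informative (exists t, capture (run sg s0 t).2) with
  | left H =>
      let t := @ex_minn (fun t => capture (run sg s0 t).2) H in
      (gamma ^ t * coef m (run sg s0 t).2)%R
  | right _ => 0%R
  end.

(* phi : token -> positional strategy is a pair of optimal pure positional
   strategies of Gamma^m_N (P_m: token m; P_{-m}: the other tokens),
   optimal from every noncapture initial state, against all pure strategies. *)
Definition optimal_pair (m : 'I_N) (phi : 'I_N -> state -> V) : Prop :=
  (forall n, legal_pos n (phi n)) /\
  forall s0 : state, ~~ capture s0 ->
  forall tau : 'I_N -> strategy, (forall n, legal_strat n (tau n)) ->
    (payoff m (fun n => if n == m then tau n else lift (phi n)) s0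
       <= payoff m (fun n => lift (phi n)) s0
     /\ payoff m (fun n => lift (phi n)) s0
       <= payoff m (fun n => if n == m then lift (phi n) else tau n) s0)%R.

Definition CR_optimal (n : 'I_N) (f : state -> V) : Prop :=
  exists (r : 'I_N) (psi : 'I_N -> state -> V),
    is_robber r /\ optimal_pair r psi /\ psi n = f.

(* A choice of (phi^n_m)_{n,m}, phi m n = phi^n_m, determining a trigger
   strategies profile. *)
Definition trigger_choice (phi : 'I_N -> 'I_N -> state -> V) : Prop :=
  forall m, optimal_pair m (phi m).

Inductive reachable (s0 : state) : state -> Prop :=
  | reach0 : reachable s0 s0
  | reachS s v : reachable s0 s -> ~~ capture s -> adjv (s.1 s.2) v ->
                 reachable s0 (step s v).

Definition positional_trigger (s0 : state) (phi : 'I_N -> 'I_N -> state -> V) : Prop :=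
  forall n m : 'I_N, exists f, CR_optimal n f /\
    forall s, reachable s0 s -> s.2 = n -> ~~ capture s -> phi m n s = f s.

End SCAR.

(* On two vertices a noncapture state has all cops on one vertex and the robber on
   the other, so every move either passes or ends the game: a cop that moves captures
   alone, a robber that moves is captured by all N-1 cops.  Hence in the CR game each cop
   must capture at once and the robber must stay (staying delays the capture by one
   step).  In Gamma^{C_1} the robber to move chooses between staying, after which C_1
   captures at time 2 (payoff gamma^2), and jumping (payoff gamma/(N-1)).  A positional
   trigger profile makes the robber stay there, so optimality forces
   gamma^2 <= gamma/(N-1); conversely, for gamma <= 1/(N-1) the profile in which everybody
   chases is optimal in every auxiliary game.  A nonpositional profile always exists:
   in Gamma^{C_{N-1}} the first cop may idle, since C_2 captures before C_{N-1} moves,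
   but an idle cop is never CR-optimal. *)

From Pilot Require Import Defs.
From HB Require Import structures.
From mathcomp Require Import all_boot zify.
From Stdlib Require Import Reals Lra Classical ClassicalEpsilon.

Set Implicit Arguments.
Unset Strict Implicit.
Unset Printing Implicit Defensive.

Lemma pow_unit_interval (x : R) k : (0 <= x <= 1 -> 0 <= x ^ k <= 1)%R.
Proof. by move=> x_unit; elim: k => [|k IH] /=; nra. Qed.

Lemma Rinv_INR_unit_interval k : (0 <= / INR k <= 1)%R.
Proof.
case: k => [|k]; first by rewrite Rinv_0; lra.
have ge1 : (1 <= INR k.+1)%R by rewrite S_INR; have := pos_INR k; lra.
split; first by apply/Rlt_le/Rinv_0_lt_compat; lra.
by rewrite -Rinv_1; apply: Rinv_le_contravar; lra.
Qed.

Section Play.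

Variables (V : finType) (N : nat).

Definition shift (sg : 'I_N -> strategy V N) (s : state V N) : 'I_N -> strategy V N :=
  fun n h x => sg n (s :: h) x.

Definition profile (phi : 'I_N -> state V N -> V) : 'I_N -> strategy V N :=
  fun n => Defs.lift (phi n).

Definition deviate (m : 'I_N) (tau sg : 'I_N -> strategy V N) : 'I_N -> strategy V N :=
  fun n => if n == m then tau n else sg n.

Definition plays (sg : 'I_N -> strategy V N) (n : 'I_N) (f : state V N -> V) : Prop :=
  forall h x, sg n h x = f x.

Lemma plays_profile phi n : plays (profile phi) n (phi n).
Proof. by []. Qed.

Lemma plays_deviate_self m tau sg f : plays tau m f -> plays (deviate m tau sg) m f.
Proof. by move=> tau_f h x; rewrite /deviate eqxx. Qed.

Lemma plays_deviate_other m tau sg n f :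
  n != m -> plays sg n f -> plays (deviate m tau sg) n f.
Proof. by move=> n_neq_m sg_f h x; rewrite /deviate (negbTE n_neq_m). Qed.

Lemma plays_shift sg s n f : plays sg n f -> plays (shift sg s) n f.
Proof. by move=> sg_f h x; exact: sg_f. Qed.

Definition next_state (sg : 'I_N -> strategy V N) (s : state V N) : state V N :=
  step s (sg s.2 [::] s).

Lemma run_shift sg s t :
  run sg s t.+1 = (s :: (run (shift sg s) (next_state sg s) t).1,
                   (run (shift sg s) (next_state sg s) t).2).
Proof.
elim: t => [//|t IH].
have -> : run sg s t.+2 = let ps := run sg s t.+1 in
  (rcons ps.1 ps.2, step ps.2 (sg ps.2.2 ps.1 ps.2)) by [].
by rewrite IH.
Qed.

Lemma val_next_tok (i : 'I_N) : next_tok i = i.+1 %% N :> nat.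
Proof.
rewrite /next_tok; case: insubP => [k lt_iN -> | /= ge_iN]; first by rewrite modn_small.
have -> : i.+1 = N by move: ge_iN (ltn_ord i); lia.
rewrite modnn; case: insubP => [k _ -> // | /=]; move: (ltn_ord i); lia.
Qed.

Lemma val_iter_next_tok (i : 'I_N) d : iter d (@next_tok N) i = (i + d) %% N :> nat.
Proof.
elim: d => [|d IH]; first by rewrite addn0 modn_small.
by rewrite iterS val_next_tok IH -addn1 modnDml -addnA addn1.
Qed.

Lemma step_stay (s : state V N) : step s (s.1 s.2) = (s.1, next_tok s.2).
Proof. by congr pair; apply/ffunP => i; rewrite ffunE; case: eqP => [->|]. Qed.

Lemma reachable_retag (e : rel V) (s0 : state V N) (j : 'I_N) :
  ~~ capture s0 -> reachable e s0 (s0.1, j).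
Proof.
move=> s0_free.
have reach_iter d : reachable e s0 (s0.1, iter d (@next_tok N) s0.2).
  elim: d => [|d IH]; first by rewrite -surjective_pairing; exact: reach0.
  set k := iter d (@next_tok N) s0.2.
  have stay_legal : adjv e (s0.1 k) (s0.1 k) by rewrite /adjv eqxx.
  by have := reachS IH s0_free stay_legal; rewrite step_stay.
have -> : j = iter (j + N - s0.2) (@next_tok N) s0.2.
  apply: val_inj; rewrite /= val_iter_next_tok.
  have -> : s0.2 + (j + N - s0.2) = j + N by move: (ltn_ord s0.2); lia.
  by rewrite modnDr modn_small.
exact: reach_iter.
Qed.

Variables (gamma eps : R).
Implicit Types (m : 'I_N) (sg : 'I_N -> strategy V N) (s : state V N).

Definition saddle_at m (phi : 'I_N -> state V N -> V) s : Prop := forall tau,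
  (payoff gamma eps m (deviate m tau (profile phi)) s <= payoff gamma eps m (profile phi) s
   <= payoff gamma eps m (deviate m (profile phi) tau) s)%R.

Lemma payoff_first_capture m sg s t :
  (forall t', (t' < t)%N -> ~~ capture (run sg s t').2) -> capture (run sg s t).2 ->
  payoff gamma eps m sg s = (gamma ^ t * coef eps m (run sg s t).2)%R.
Proof.
move=> free_before caught; rewrite /payoff.
case: excluded_middle_informative => [ex|]; last by case; exists t.
case: ex_minnP => t0 caught0 min_t0.
suff -> : t0 = t by [].
apply/eqP; rewrite eqn_leq min_t0 // leqNgt; apply/negP => /free_before.
by rewrite caught0.
Qed.

Lemma payoff_never_captured m sg s :
  (forall t, ~~ capture (run sg s t).2) -> payoff gamma eps m sg s = 0%R.
Proof.
move=> free; rewrite /payoff; case: excluded_middle_informative => // ex.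
by exfalso; case: ex => t; apply/negP.
Qed.

Lemma payoff_cases m sg s : payoff gamma eps m sg s = 0%R \/
  exists t, payoff gamma eps m sg s = (gamma ^ t * coef eps m (run sg s t).2)%R.
Proof.
case: (classic (exists t, capture (run sg s t).2)) => [ex|never].
  right; case: (ex_minnP ex) => t caught min_t; exists t.
  apply: payoff_first_capture => // t' lt_t't; apply/negP => /min_t.
  by rewrite leqNgt lt_t't.
left; apply: payoff_never_captured => t; apply/negP => caught.
by apply: never; exists t.
Qed.

Lemma payoff_captured m sg s : capture s -> payoff gamma eps m sg s = coef eps m s.
Proof. by move=> caught; rewrite (payoff_first_capture _ (t := 0)) //= Rmult_1_l. Qed.

Lemma payoff_next m sg s : ~~ capture s ->
  payoff gamma eps m sg s = (gamma * payoff gamma eps m (shift sg s) (next_state sg s))%R.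
Proof.
move=> s_free; set sg' := shift sg s; set s' := next_state sg s.
case: (classic (exists t, capture (run sg' s' t).2)) => [ex|never].
  case: (ex_minnP ex) => t caught min_t.
  have free_before t' : (t' < t)%N -> ~~ capture (run sg' s' t').2.
    by move=> lt_t't; apply/negP => /min_t; rewrite leqNgt lt_t't.
  have free_before' t' : (t' < t.+1)%N -> ~~ capture (run sg s t').2.
    by case: t' => [|t'] // lt_t't; rewrite run_shift free_before.
  have caught' : capture (run sg s t.+1).2 by rewrite run_shift.
  rewrite (payoff_first_capture _ free_before' caught') (payoff_first_capture _ free_before caught).
  by rewrite run_shift /= Rmult_assoc.
have free_after t : ~~ capture (run sg' s' t).2 by apply/negP => caught; apply: never; exists t.
have never_from_s t : ~~ capture (run sg s t).2.
  by case: t => [|t]; [exact: s_free | rewrite run_shift; exact: free_after].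
by rewrite (payoff_never_captured _ free_after) (payoff_never_captured _ never_from_s) Rmult_0_r.
Qed.

Hypotheses (gamma_unit : (0 <= gamma <= 1)%R) (eps_unit : (0 <= eps <= 1)%R).

Lemma coef_robber m s : is_robber m -> coef eps m s = (-1)%R.
Proof. by rewrite /coef => ->. Qed.

Lemma coef_cop_unit_interval m s : ~~ is_robber m -> (0 <= coef eps m s <= 1)%R.
Proof.
move=> cop_m; rewrite /coef (negbTE cop_m) /Rdiv.
case: ifP => _; first exact: Rinv_INR_unit_interval.
have [inv_K_ge0 inv_K_le1] := Rinv_INR_unit_interval #|cops_at s|.
have [inv_ge0 inv_le1] := Rinv_INR_unit_interval (N - #|cops_at s| - 1).
case: ifP => _; nra.
Qed.

Lemma payoff_cop_unit_interval m sg s :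
  ~~ is_robber m -> (0 <= payoff gamma eps m sg s <= 1)%R.
Proof.
move=> cop_m; case: (payoff_cases m sg s) => [->|[t ->]]; first lra.
have := pow_unit_interval t gamma_unit.
have := coef_cop_unit_interval (run sg s t).2 cop_m; nra.
Qed.

Lemma payoff_robber_bounds m sg s :
  is_robber m -> (-1 <= payoff gamma eps m sg s <= 0)%R.
Proof.
move=> rob_m; case: (payoff_cases m sg s) => [->|[t ->]]; first lra.
rewrite coef_robber //; have := pow_unit_interval t gamma_unit; nra.
Qed.

End Play.

Section TwoVertexGame.

Variable N : nat.
Hypothesis N_gt3 : 3 < N.
Implicit Types (m n : 'I_N).

Lemma robber_subproof : N.-1 < N. Proof. lia. Qed.
Lemma cop0_subproof : 0 < N. Proof. lia. Qed.
Lemma cop1_subproof : 1 < N. Proof. lia. Qed.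
Lemma last_cop_subproof : N.-2 < N. Proof. lia. Qed.

(* Tokens are 0-indexed: [cop0], [cop1] and [last_cop] are C_1, C_2 and C_{N-1}. *)
Definition robber : 'I_N := Ordinal robber_subproof.
Definition cop0 : 'I_N := Ordinal cop0_subproof.
Definition cop1 : 'I_N := Ordinal cop1_subproof.
Definition last_cop : 'I_N := Ordinal last_cop_subproof.

Lemma is_robberE n : is_robber n = (n == robber).
Proof. by rewrite /is_robber -val_eqE. Qed.

Lemma is_copE n : is_cop n = (n != robber).
Proof. by rewrite /is_cop -val_eqE /=; move: (ltn_ord n); lia. Qed.

Lemma cop0_neq_robber : cop0 != robber. Proof. by rewrite -val_eqE /=; lia. Qed.
Lemma cop1_neq_robber : cop1 != robber. Proof. by rewrite -val_eqE /=; lia. Qed.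
Lemma last_cop_neq_robber : last_cop != robber. Proof. by rewrite -val_eqE /=; lia. Qed.
Lemma cop1_neq_cop0 : cop1 != cop0. Proof. by rewrite -val_eqE. Qed.
Lemma last_cop_neq_cop0 : last_cop != cop0. Proof. by rewrite -val_eqE /=; lia. Qed.
Lemma last_cop_neq_cop1 : last_cop != cop1. Proof. by rewrite -val_eqE /=; lia. Qed.

Lemma next_tok_robber : next_tok robber = cop0.
Proof. by apply: val_inj => /=; rewrite val_next_tok prednK ?modnn //; lia. Qed.

Lemma next_tok_cop0 : next_tok cop0 = cop1.
Proof. by apply: val_inj; rewrite /= val_next_tok modn_small //=; lia. Qed.

Variables (V : finType) (e : rel V).
Hypotheses (e_irr : irreflexive e) (G_conn : forall x y : V, connect e x y) (card_V : #|V| = 2).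
Implicit Types (sg tau : 'I_N -> strategy V N) (s : state V N).

Lemma two_vertices (x y z : V) : x != y -> z = x \/ z = y.
Proof.
move=> x_neq_y; case: (eqVneq z x) => [|z_neq_x]; first by left.
case: (eqVneq z y) => [|z_neq_y]; first by right.
have : uniq [:: x; y; z] by rewrite /= !inE negb_or x_neq_y -!(eq_sym z) z_neq_x z_neq_y.
move/card_uniqP => /= card3; have := max_card (mem [:: x; y; z]).
by rewrite card3 card_V.
Qed.

Lemma adjv_all (x y : V) : adjv e x y.
Proof.
rewrite /adjv; case: (eqVneq x y) => //= x_neq_y.
have /connectP [[|z p] /= walk_xy last_y] := G_conn x y.
  by rewrite last_y eqxx in x_neq_y.
case/andP: walk_xy => e_xz _.
by case: (two_vertices z x_neq_y) e_xz => ->; rewrite ?e_irr.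
Qed.

Lemma in_cops_at s n : (n \in cops_at s) = is_cop n && (s.1 n == s.1 robber).
Proof.
rewrite inE; congr andb; apply/existsP/idP => [[j /andP [rob_j /eqP ->]]|].
  by rewrite is_robberE in rob_j; rewrite (eqP rob_j).
by exists robber; rewrite is_robberE !eqxx.
Qed.

Lemma noncapture_cop s n : ~~ capture s -> is_cop n -> s.1 n != s.1 robber.
Proof.
move=> s_free cop_n; apply/negP => caught; move: s_free; rewrite /capture card_gt0.
by case/set0Pn; exists n; rewrite in_cops_at cop_n caught.
Qed.

Lemma cops_at_cop_catches s :
  ~~ capture s -> is_cop s.2 -> cops_at (step s (s.1 robber)) = [set s.2].
Proof.
move=> s_free cop_mover; have robber_idle : (robber == s.2) = false.
  by move: cop_mover; rewrite is_copE eq_sym => /negbTE.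
apply/setP => n; rewrite in_cops_at inE /step /= !ffunE robber_idle.
case: (eqVneq n s.2) => [->|n_idle]; first by rewrite cop_mover eqxx.
by case cop_n: (is_cop n); rewrite //= (negbTE (noncapture_cop s_free cop_n)).
Qed.

Lemma cops_at_robber_jumps s v : ~~ capture s -> s.2 = robber -> v != s.1 robber ->
  cops_at (step s v) = [set n | is_cop n].
Proof.
move=> s_free rob_moves jump; apply/setP => n.
rewrite in_cops_at inE /step /= !ffunE rob_moves eqxx.
case cop_n: (is_cop n) => //=.
have n_idle : (n == robber) = false by apply/negbTE; rewrite -is_copE.
rewrite n_idle.
by case: (two_vertices (s.1 n) jump) (noncapture_cop s_free cop_n) => ->; rewrite ?eqxx.
Qed.

Lemma card_cops : #|[set n : 'I_N | is_cop n]| = N.-1.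
Proof.
have -> : [set n : 'I_N | is_cop n] = [set~ robber] by apply/setP => n; rewrite !inE is_copE.
by rewrite cardsC1 card_ord.
Qed.

Lemma coef_single_catcher s k m : cops_at s = [set k] ->
  coef 0 m s = (if m == robber then -1 else if m == k then 1 else 0)%R.
Proof.
move=> catchers; rewrite /coef catchers cards1 is_robberE inE.
case: (m == robber) => //; rewrite (_ : (1 == N.-1) = false); last by apply/negbTE; lia.
by case: (m == k); rewrite /Rdiv ?Rmult_0_l //= Rinv_1 Rmult_1_r Rminus_0_r.
Qed.

Lemma coef_all_cops s m : cops_at s = [set n | is_cop n] -> m != robber ->
  coef 0 m s = (/ INR (N - 1))%R.
Proof.
by move=> catchers m_cop; rewrite /coef catchers card_cops is_robberE (negbTE m_cop) eqxx.
Qed.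

Variable gamma : R.
Hypotheses (gamma_gt0 : (0 < gamma)%R) (gamma_lt1 : (gamma < 1)%R).

Lemma payoff_stay m sg s : ~~ capture s -> sg s.2 [::] s = s.1 s.2 ->
  payoff gamma 0 m sg s = (gamma * payoff gamma 0 m (shift sg s) (s.1, next_tok s.2))%R.
Proof. by move=> s_free stays; rewrite payoff_next // /next_state stays step_stay. Qed.

Lemma payoff_cop_catches m sg s : ~~ capture s -> is_cop s.2 -> sg s.2 [::] s = s.1 robber ->
  payoff gamma 0 m sg s = (gamma * if m == robber then -1 else if m == s.2 then 1 else 0)%R.
Proof.
move=> s_free cop_mover catches; have catchers := cops_at_cop_catches s_free cop_mover.
rewrite payoff_next // /next_state catches payoff_captured ?(coef_single_catcher _ catchers) //.
by rewrite /capture catchers cards1.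
Qed.

Lemma payoff_robber_jumps m sg s : ~~ capture s -> s.2 = robber -> sg robber [::] s != s.1 robber ->
  payoff gamma 0 m sg s = (gamma * if m == robber then -1 else / INR (N - 1))%R.
Proof.
move=> s_free rob_moves jump; have catchers := cops_at_robber_jumps s_free rob_moves jump.
rewrite payoff_next // /next_state rob_moves payoff_captured; last first.
  by rewrite /capture catchers card_cops; lia.
case: eqP => [->|/eqP m_cop]; first by rewrite coef_robber // is_robberE.
by rewrite coef_all_cops.
Qed.

Let gamma_unit : (0 <= gamma <= 1)%R. Proof. lra. Qed.
Let eps0_unit : (0 <= 0 <= 1)%R. Proof. lra. Qed.

Lemma payoff_cop_le_gamma m sg s : m != robber -> ~~ capture s ->
  (0 <= payoff gamma 0 m sg s <= gamma)%R.
Proof.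
move=> m_cop s_free; rewrite payoff_next //.
have cop_m : ~~ is_robber m by rewrite is_robberE.
by have := payoff_cop_unit_interval gamma_unit eps0_unit (shift sg s) (next_state sg s) cop_m; nra.
Qed.

Lemma payoff_robber_ge_gamma sg s : ~~ capture s ->
  (- gamma <= payoff gamma 0 robber sg s <= 0)%R.
Proof.
move=> s_free; rewrite payoff_next //.
have rob : is_robber robber by rewrite is_robberE.
by have := payoff_robber_bounds 0 gamma_unit (shift sg s) (next_state sg s) rob; nra.
Qed.

Lemma payoff_stay_cop_le m sg s : m != robber -> ~~ capture s -> sg s.2 [::] s = s.1 s.2 ->
  (payoff gamma 0 m sg s <= gamma * gamma)%R.
Proof.
move=> m_cop s_free stays; rewrite payoff_stay //.
have next_free : ~~ capture (s.1, next_tok s.2) by [].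
by have := payoff_cop_le_gamma (shift sg s) m_cop next_free; nra.
Qed.

Lemma payoff_stay_robber_ge sg s : ~~ capture s -> sg s.2 [::] s = s.1 s.2 ->
  (- (gamma * gamma) <= payoff gamma 0 robber sg s)%R.
Proof.
move=> s_free stays; rewrite payoff_stay //.
have next_free : ~~ capture (s.1, next_tok s.2) by [].
by have := payoff_robber_ge_gamma (shift sg s) next_free; nra.
Qed.

Definition chase (s : state V N) : V := s.1 robber.
Definition stay (s : state V N) : V := s.1 s.2.

Lemma optimal_pairP m phi :
  (forall s, ~~ capture s -> saddle_at gamma 0 m phi s) -> optimal_pair e gamma 0 m phi.
Proof. by move=> saddle; split=> [n x _ _|s s_free tau _]; [exact: adjv_all | exact: saddle]. Qed.

Lemma payoff_robber_waits m sg s : ~~ capture s -> s.2 = robber ->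
  sg robber [::] s = s.1 robber -> sg cop0 [:: s] (s.1, cop0) = s.1 robber ->
  payoff gamma 0 m sg s =
    (gamma * gamma * if m == robber then -1 else if m == cop0 then 1 else 0)%R.
Proof.
move=> s_free rob_moves waits cop0_catches.
rewrite payoff_stay ?rob_moves // next_tok_robber payoff_cop_catches //= ?Rmult_assoc //.
by rewrite is_copE cop0_neq_robber.
Qed.

Lemma payoff_other_cop_catches m sg s : m != robber -> ~~ capture s -> s.2 != robber ->
  s.2 != m -> plays sg s.2 chase -> payoff gamma 0 m sg s = 0%R.
Proof.
move=> m_cop s_free cop_mover other chases.
by rewrite payoff_cop_catches ?is_copE // (negbTE m_cop) eq_sym (negbTE other) Rmult_0_r.
Qed.

Lemma saddle_at_cop_turn m phi s : m != robber -> ~~ capture s -> s.2 = m ->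
  phi m s = s.1 robber -> saddle_at gamma 0 m phi s.
Proof.
move=> m_cop s_free turn catches tau.
have catch_value sg : plays sg m (phi m) -> payoff gamma 0 m sg s = gamma.
  move=> plays_m; rewrite payoff_cop_catches ?turn ?is_copE ?plays_m //.
  by rewrite (negbTE m_cop) eqxx Rmult_1_r.
rewrite (catch_value _ (plays_profile phi m)).
rewrite (catch_value _ (plays_deviate_self tau (plays_profile phi m))).
by have := payoff_cop_le_gamma (deviate m tau (profile phi)) m_cop s_free; lra.
Qed.

Lemma saddle_at_cop_idle m phi s : m != robber ->
  (forall sg, (forall n, n != m -> plays sg n (phi n)) -> payoff gamma 0 m sg s = 0%R) ->
  saddle_at gamma 0 m phi s.
Proof.
move=> m_cop idle tau.
rewrite (idle (profile phi)) => [|n _]; last exact: plays_profile.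
rewrite idle => [|n n_idle]; last exact/plays_deviate_other/plays_profile.
have cop_m : ~~ is_robber m by rewrite is_robberE.
by have := payoff_cop_unit_interval gamma_unit eps0_unit (deviate m (profile phi) tau) s cop_m; lra.
Qed.

Definition chase_all : 'I_N -> state V N -> V := fun _ => chase.

Lemma optimal_pair_robber_chase_all : optimal_pair e gamma 0 robber chase_all.
Proof.
apply: optimal_pairP => s s_free tau.
set dev := deviate robber tau (profile chase_all).
set stick := deviate robber (profile chase_all) tau.
have cops_chase n : n != robber -> plays dev n chase.
  by move=> n_cop; apply: plays_deviate_other.
have robber_chases : plays stick robber chase by apply/plays_deviate_self.
case: (eqVneq s.2 robber) => [rob_moves | cop_moves].
- have -> : payoff gamma 0 robber (profile chase_all) s = (- (gamma * gamma))%R.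
    by rewrite payoff_robber_waits // eqxx; ring.
  split; last by apply: payoff_stay_robber_ge; rewrite // rob_moves robber_chases.
  case: (eqVneq (tau robber [::] s) (s.1 robber)) => [tau_waits | tau_jumps].
  + rewrite payoff_robber_waits ?eqxx //; first lra.
      by rewrite /dev /deviate eqxx.
    exact: (cops_chase _ cop0_neq_robber [:: s] (s.1, cop0)).
  + rewrite payoff_robber_jumps ?eqxx //; [nra | by rewrite /dev /deviate eqxx].
- have catches sg : plays sg s.2 chase -> payoff gamma 0 robber sg s = (- gamma)%R.
    by move=> chases; rewrite payoff_cop_catches ?is_copE ?chases // eqxx; ring.
  rewrite (catches _ (cops_chase _ cop_moves)) (catches _ (plays_profile chase_all s.2)).
  by have := payoff_robber_ge_gamma stick s_free; lra.
Qed.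

Lemma optimal_pair_cop_chase_all m : m != robber -> m != cop0 ->
  optimal_pair e gamma 0 m chase_all.
Proof.
move=> m_cop m_late; apply: optimal_pairP => s s_free.
case: (eqVneq s.2 m) => [turn|idle]; first exact: saddle_at_cop_turn.
apply: saddle_at_cop_idle => // sg others_chase.
case: (eqVneq s.2 robber) => [rob_moves|cop_moves].
  have cop0_idle : cop0 != m by rewrite eq_sym.
  rewrite payoff_robber_waits ?(negbTE m_cop) ?(negbTE m_late) ?Rmult_0_r //.
    by have := others_chase _ idle [::] s; rewrite rob_moves.
  exact: (others_chase _ cop0_idle [:: s] (s.1, cop0)).
exact: payoff_other_cop_catches (others_chase _ idle).
Qed.

(* Optimal in Gamma^{C_{N-1}} because C_2 captures before C_{N-1} moves; this is where
   N > 3 is needed. *)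
Definition lazy_first_cop : 'I_N -> state V N -> V :=
  fun n => if n == cop0 then stay else chase.

Lemma optimal_pair_last_cop_lazy_first_cop :
  optimal_pair e gamma 0 last_cop lazy_first_cop.
Proof.
have last_cop_cop := last_cop_neq_robber.
have cop0_idle : cop0 != last_cop by rewrite eq_sym last_cop_neq_cop0.
have cop1_idle : cop1 != last_cop by rewrite eq_sym last_cop_neq_cop1.
apply: optimal_pairP => s s_free.
case: (eqVneq s.2 last_cop) => [turn|idle].
  by apply: saddle_at_cop_turn; rewrite // /lazy_first_cop (negbTE last_cop_neq_cop0).
apply: saddle_at_cop_idle => // sg others.
have cop1_catches x sg' : ~~ capture x -> x.2 = cop1 -> plays sg' cop1 chase ->
    payoff gamma 0 last_cop sg' x = 0%R.
  by move=> x_free cop1_moves chases; apply: payoff_other_cop_catches;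
    rewrite ?cop1_moves ?cop1_neq_robber.
have cop0_waits x sg' : ~~ capture x -> x.2 = cop0 -> plays sg' cop0 stay ->
    plays sg' cop1 chase -> payoff gamma 0 last_cop sg' x = 0%R.
  move=> x_free cop0_moves waits chases.
  rewrite payoff_stay ?cop0_moves ?next_tok_cop0 ?cop1_catches ?Rmult_0_r //.
    exact: plays_shift.
  by have := waits [::] x; rewrite /stay cop0_moves.
have cop0_stays : plays sg cop0 stay.
  by have := others cop0 cop0_idle; rewrite /lazy_first_cop eqxx.
have cop1_chases : plays sg cop1 chase.
  by have := others cop1 cop1_idle; rewrite /lazy_first_cop (negbTE cop1_neq_cop0).
have robber_chases : plays sg robber chase.
  have robber_idle : robber != last_cop by rewrite eq_sym.
  by have := others robber robber_idle; rewrite /lazy_first_cop eq_sym (negbTE cop0_neq_robber).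
case: (eqVneq s.2 robber) => [rob_moves|cop_moves].
  by rewrite payoff_stay ?rob_moves ?next_tok_robber ?cop0_waits ?Rmult_0_r //; apply: plays_shift.
case: (eqVneq s.2 cop0) => [cop0_moves|cop_late]; first exact: cop0_waits.
apply: payoff_other_cop_catches; rewrite ?last_cop_cop //.
by have := others _ idle; rewrite /lazy_first_cop (negbTE cop_late).
Qed.

(* The robber's best reply in Gamma^{C_1}: staying is worth gamma^2 to C_1, jumping
   onto the cops gamma/(N-1). *)
Definition robber_vs_first_cop (x : state V N) : V :=
  if Rle_dec gamma (/ INR (N - 1)) then x.1 robber else x.1 cop0.

Definition first_cop_game : 'I_N -> state V N -> V :=
  fun n => if n == robber then robber_vs_first_cop else chase.

Lemma optimal_pair_first_cop_game : optimal_pair e gamma 0 cop0 first_cop_game.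
Proof.
have cop0_cop := cop0_neq_robber.
apply: optimal_pairP => s s_free.
case: (eqVneq s.2 cop0) => [turn|idle].
  by apply: saddle_at_cop_turn; rewrite // /first_cop_game (negbTE cop0_cop).
case: (eqVneq s.2 robber) => [rob_moves|cop_moves]; last first.
  apply: saddle_at_cop_idle => // sg others; apply: payoff_other_cop_catches => //.
  by have := others _ idle; rewrite /first_cop_game (negbTE cop_moves).
move=> tau; set dev := deviate cop0 tau _; set stick := deviate cop0 _ tau.
have wait_value sg : sg robber [::] s = s.1 robber ->
    sg cop0 [:: s] (s.1, cop0) = s.1 robber -> payoff gamma 0 cop0 sg s = (gamma * gamma)%R.
  by move=> waits catches; rewrite payoff_robber_waits // (negbTE cop0_cop) eqxx; ring.
have jump_value sg : sg robber [::] s != s.1 robber ->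
    payoff gamma 0 cop0 sg s = (gamma * / INR (N - 1))%R.
  by move=> jumps; rewrite payoff_robber_jumps // (negbTE cop0_cop).
have first_cop_chases : first_cop_game cop0 = chase by rewrite /first_cop_game (negbTE cop0_cop).
have stick_value : payoff gamma 0 cop0 stick s = (gamma * gamma)%R \/
    payoff gamma 0 cop0 stick s = (gamma * / INR (N - 1))%R.
  case: (eqVneq (stick robber [::] s) (s.1 robber)) => [waits|jumps]; last first.
    by right; exact: jump_value.
  by left; apply: wait_value; rewrite // /stick /deviate eqxx /profile /Defs.lift first_cop_chases.
have dev_reply : dev robber [::] s = robber_vs_first_cop s.
  by rewrite /dev /deviate eq_sym (negbTE cop0_cop) /profile /Defs.lift /first_cop_game eqxx.
have profile_reply : profile first_cop_game robber [::] s = robber_vs_first_cop s.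
  by rewrite /profile /Defs.lift /first_cop_game eqxx.
have inv_gt0 : (0 < / INR (N - 1))%R by apply/Rinv_0_lt_compat/lt_0_INR/ltP; lia.
move: dev_reply profile_reply; rewrite /robber_vs_first_cop.
case: Rle_dec => [le|not_le] dev_reply profile_reply.
- rewrite (wait_value (profile _)) //; last by rewrite /profile /Defs.lift first_cop_chases.
  split; first by apply: payoff_stay_cop_le; rewrite // rob_moves dev_reply.
  by case: stick_value => ->; nra.
- have gt := Rnot_le_lt _ _ not_le.
  have jumps : s.1 cop0 != s.1 robber by apply: noncapture_cop; rewrite ?is_copE.
  rewrite (jump_value dev) ?dev_reply // (jump_value (profile _)) ?profile_reply //.
  by split; [lra | case: stick_value => ->; nra].
Qed.

Lemma legal_strat_all n (sg : strategy V N) : legal_strat e n sg.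
Proof. by move=> h x _ _; exact: adjv_all. Qed.

Lemma CR_optimal_robberP n f : CR_optimal e gamma 0 n f ->
  exists2 psi, optimal_pair e gamma 0 robber psi & psi n = f.
Proof.
case=> r [psi [rob_r [opt psi_f]]]; rewrite is_robberE in rob_r.
by rewrite -(eqP rob_r); exists psi.
Qed.

Lemma CR_optimal_chase n : CR_optimal e gamma 0 n chase.
Proof.
exists robber, chase_all; rewrite is_robberE eqxx.
by split=> //; split=> //; exact: optimal_pair_robber_chase_all.
Qed.

Lemma CR_optimal_cop_chases n f s : CR_optimal e gamma 0 n f -> n != robber ->
  ~~ capture s -> s.2 = n -> f s = s.1 robber.
Proof.
move=> /CR_optimal_robberP [psi [_ saddle] <-] n_cop s_free turn.
have value_le : (payoff gamma 0 robber (profile psi) s <=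
    payoff gamma 0 robber (deviate robber (profile psi) (profile chase_all)) s)%R.
  by case: (saddle s s_free (profile chase_all) (fun k => legal_strat_all _)).
have cop_moves : is_cop s.2 by rewrite is_copE turn.
have chases : deviate robber (profile psi) (profile chase_all) s.2 [::] s = s.1 robber.
  by rewrite /deviate turn (negbTE n_cop).
rewrite (payoff_cop_catches _ s_free cop_moves chases) eqxx in value_le.
case: (eqVneq (psi n s) (s.1 robber)) => // moves.
have stays : psi n s = s.1 n.
  have cop_n_apart : s.1 n != s.1 robber by rewrite -turn; exact: noncapture_cop.
  by case: (two_vertices (psi n s) cop_n_apart) => // catches; rewrite catches eqxx in moves.
have stays' : profile psi s.2 [::] s = s.1 s.2 by rewrite turn.
by have := payoff_stay_robber_ge s_free stays'; nra.
Qed.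

Lemma CR_optimal_robber_stays f s : CR_optimal e gamma 0 robber f ->
  ~~ capture s -> s.2 = robber -> f s = s.1 robber.
Proof.
move=> /CR_optimal_robberP [psi [_ saddle] <-] s_free turn.
have value_ge : (payoff gamma 0 robber (deviate robber (profile chase_all) (profile psi)) s <=
    payoff gamma 0 robber (profile psi) s)%R.
  by case: (saddle s s_free (profile chase_all) (fun k => legal_strat_all _)).
case: (eqVneq (psi robber s) (s.1 robber)) => // jumps.
have psi_jumps : profile psi robber [::] s != s.1 robber by [].
rewrite (payoff_robber_jumps _ s_free turn psi_jumps) eqxx in value_ge.
have stays : deviate robber (profile chase_all) (profile psi) s.2 [::] s = s.1 s.2.
  by rewrite /deviate turn eqxx.
by have := payoff_stay_robber_ge s_free stays; nra.
Qed.

Definition trigger_profile (lazy : bool) (m : 'I_N) : 'I_N -> state V N -> V :=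
  if m == cop0 then first_cop_game
  else if lazy && (m == last_cop) then lazy_first_cop else chase_all.

Lemma trigger_choice_profile lazy : trigger_choice e gamma 0 (trigger_profile lazy).
Proof.
move=> m; rewrite /trigger_profile; case: (eqVneq m cop0) => [->|m_late].
  exact: optimal_pair_first_cop_game.
case: (eqVneq m last_cop) => [->|m_not_last]; rewrite ?andbT ?andbF.
  case: lazy; first exact: optimal_pair_last_cop_lazy_first_cop.
  exact: optimal_pair_cop_chase_all last_cop_neq_robber last_cop_neq_cop0.
case: (eqVneq m robber) => [->|m_cop]; first exact: optimal_pair_robber_chase_all.
exact: optimal_pair_cop_chase_all.
Qed.

Lemma lazy_trigger_not_positional s0 : ~~ capture s0 ->
  ~ positional_trigger e gamma 0 s0 (trigger_profile true).
Proof.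
move=> s0_free /(_ cop0 last_cop) [f [CR_f agree]].
have s_free : ~~ capture (s0.1, cop0) by [].
have := agree _ (reachable_retag e cop0 s0_free) erefl s_free.
rewrite /trigger_profile (negbTE last_cop_neq_cop0) eqxx /lazy_first_cop /stay /=.
rewrite (CR_optimal_cop_chases CR_f cop0_neq_robber s_free erefl) => /= same_vertex.
have cop0_cop : is_cop cop0 by rewrite is_copE cop0_neq_robber.
by move: (noncapture_cop s0_free cop0_cop); rewrite same_vertex eqxx.
Qed.

Lemma chase_trigger_positional s0 : (gamma <= / INR (N - 1))%R ->
  positional_trigger e gamma 0 s0 (trigger_profile false).
Proof.
move=> le n m; exists chase; split=> [|s _ _ _]; first exact: CR_optimal_chase.
rewrite /trigger_profile andFb; case: (m == cop0) => //.
by rewrite /first_cop_game; case: (n == robber) => //; rewrite /robber_vs_first_cop; case: Rle_dec.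
Qed.

Lemma positional_trigger_gamma_le s0 phi : ~~ capture s0 ->
  trigger_choice e gamma 0 phi -> positional_trigger e gamma 0 s0 phi ->
  (gamma <= / INR (N - 1))%R.
Proof.
move=> s0_free optimal /(_ robber cop0) [f [CR_f agree]].
set s : state V N := (s0.1, robber).
have s_free : ~~ capture s by [].
have waits : phi cop0 robber s = s.1 robber.
  by rewrite (agree s (reachable_retag e robber s0_free)) // (CR_optimal_robber_stays CR_f).
have [_ saddle] := optimal cop0.
pose jump : 'I_N -> strategy V N := profile (fun _ x => x.1 cop0).
have wait_le : (payoff gamma 0 cop0 (deviate cop0 (profile chase_all) (profile (phi cop0))) s
    <= payoff gamma 0 cop0 (profile (phi cop0)) s)%R.
  by case: (saddle s s_free (profile chase_all) (fun k => legal_strat_all _)).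
have le_jump : (payoff gamma 0 cop0 (profile (phi cop0)) s
    <= payoff gamma 0 cop0 (deviate cop0 (profile (phi cop0)) jump) s)%R.
  by case: (saddle s s_free jump (fun k => legal_strat_all _)).
have cop0_cop := cop0_neq_robber.
have robber_cop0 : (robber == cop0) = false by rewrite eq_sym; apply/negbTE.
have wait_value : payoff gamma 0 cop0 (deviate cop0 (profile chase_all) (profile (phi cop0))) s
    = (gamma * gamma)%R.
  rewrite payoff_robber_waits //= ?(negbTE cop0_cop) ?eqxx ?Rmult_1_r //.
  by rewrite /deviate robber_cop0.
have jump_value : payoff gamma 0 cop0 (deviate cop0 (profile (phi cop0)) jump) s
    = (gamma * / INR (N - 1))%R.
  have jumps : deviate cop0 (profile (phi cop0)) jump robber [::] s != s.1 robber.
    by rewrite /deviate robber_cop0; apply: noncapture_cop; rewrite ?is_copE.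
  by rewrite (payoff_robber_jumps _ s_free erefl jumps) (negbTE cop0_cop).
rewrite wait_value in wait_le; rewrite jump_value in le_jump.
by apply: (Rmult_le_reg_l gamma) => //; lra.
Qed.

End TwoVertexGame.

Theorem mainTheorem3
  (V : finType) (e : rel V)
  (e_sym : symmetric e) (e_irr : irreflexive e)
  (G_conn : forall x y : V, connect e x y)
  (V2 : #|V| = 2%N)
  (N : nat) (HN : (3 < N)%N)
  (s0 : state V N) (Hs0 : ~~ capture s0) :
  (forall gamma : R, (0 < gamma < 1)%R ->
     exists phi, trigger_choice e gamma 0%R phi /\ ~ positional_trigger e gamma 0%R s0 phi)
  /\
  (forall gamma : R, (0 < gamma < 1)%R ->
     ((exists phi, trigger_choice e gamma 0%R phi /\ positional_trigger e gamma 0%R s0 phi)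
      <-> (gamma <= / INR (N - 1))%R)).
Proof.
have choice := trigger_choice_profile HN e_irr G_conn V2.
split=> gamma [gamma_gt0 gamma_lt1].
  exists (trigger_profile HN gamma true); split; first exact: choice.
  exact: (lazy_trigger_not_positional e_irr G_conn V2 gamma_gt0 gamma_lt1 Hs0).
split=> [[phi [optimal positional]] | small_gamma].
  exact: (positional_trigger_gamma_le HN e_irr G_conn V2 gamma_gt0 gamma_lt1 Hs0 optimal).
exists (trigger_profile HN gamma false); split; first exact: choice.
exact: (chase_trigger_positional HN e_irr G_conn V2 gamma_gt0 gamma_lt1).
Qed.
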